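(* Let $n\ge4$ and let $W_n$ be the wheel graph on $n$ vertices with signless Laplacian matrix \[Q=\left[\begin{array}{c|c} n-1 & \mathbf{1}^T \\ \hline \mathbf{1} & B \end{array}\right],\] where $B$ is the circulant matrix $\mathrm{circ}(3,1,0,\ldots,0,1)$ of order $n-1$. Then the Moore–Penrose inverse of $Q$ is \[Q^+=\frac{1}{4(n-1)} \left[\begin{array}{r|c} 5 & -\mathbf{1}^T \\ \hline -\mathbf{1} & J_{n-1}+2X \end{array}\right],\] where, with $C=\mathrm{circ}(1,0,\ldots,0,1)$ of order $n-1$, $X=2(CC^T+I_{n-1})^{-1}\left[ (n-1)I_{n-1}-J_{n-1}\right]=\mathrm{circ}(b_0,b_1,\ldots,b_{n-2})$ with, for $j=0,\ldots,n-2$, \[b_j=-\frac{2}{5}+\frac{2^{n-j}(n-1)}{\sqrt{5}}\left[\frac{(-3+\sqrt{5})^j}{2^{n-1}-(-3+\sqrt{5})^{n-1}}-\frac{(-3-\sqrt{5})^j}{2^{n-1}-(-3-\sqrt{5})^{n-1}}\right].\]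
   Context: The wheel graph $W_n$ ($n\ge4$) is a cycle on $n-1$ vertices together with a hub vertex adjacent to every cycle vertex; in the displayed form the hub is listed first and the cycle vertices follow in cyclic order. The signless Laplacian is $Q=D+A$, where $A$ is the adjacency matrix and $D$ the diagonal degree matrix. For $c_0,\dots,c_{k-1}$, $\mathrm{circ}(c_0,\ldots,c_{k-1})$ denotes the $k\times k$ circulant matrix whose $(i,j)$-entry is $c_{(j-i)\bmod k}$. $\mathbf 1$ is the all-ones column vector of length $n-1$, $J_{n-1}$ the $(n-1)\times(n-1)$ all-ones matrix, $I_{n-1}$ the identity. The Moore–Penrose inverse $A^+$ of a real matrix $A$ is the unique matrix with $AA^+A=A$, $A^+AA^+=A^+$, $(AA^+)^T=AA^+$, $(A^+A)^T=A^+A$. *)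

From mathcomp Require Import all_boot all_order all_algebra.
Set Implicit Arguments. Unset Strict Implicit. Unset Printing Implicit Defensive.
Import Order.TTheory GRing.Theory Num.Theory.
Local Open Scope ring_scope.

Definition is_moore_penrose (R : nzRingType) (m k : nat)
  (A : 'M[R]_(m, k)) (P : 'M[R]_(k, m)) : Prop :=
  [/\ A *m P *m A = A, P *m A *m P = P,
      (A *m P)^T = A *m P & (P *m A)^T = P *m A].

Definition circ (R : nzRingType) (k : nat) (c : nat -> R) : 'M[R]_k :=
  \matrix_(i < k, j < k) c ((j + k - i) %% k)%N.

(* Wheel graph W_n on vertices 'I_(1 + n.-1): vertex 0 is the hub,
   vertices 1..n-1 form a cycle in this cyclic order. *)
Definition cyc_adj (m a b : nat) : bool :=
  (((a.+1) %% m)%N == b) || (((b.+1) %% m)%N == a).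

Definition wheel_adj (n : nat) (i j : 'I_(1 + n.-1)) : bool :=
  (i != j) &&
  [|| (val i == 0%N), (val j == 0%N) | cyc_adj n.-1 (val i).-1 (val j).-1].

Arguments wheel_adj : clear implicits.

Definition wheel_A (R : nzRingType) (n : nat) : 'M[R]_(1 + n.-1) :=
  \matrix_(i < 1 + n.-1, j < 1 + n.-1) (wheel_adj n i j)%:R.

Definition wheel_D (R : nzRingType) (n : nat) : 'M[R]_(1 + n.-1) :=
  diag_mx (\row_(i < 1 + n.-1) (\sum_(j < 1 + n.-1) (wheel_adj n i j)%:R)).

Definition wheel_Q (R : nzRingType) (n : nat) : 'M[R]_(1 + n.-1) :=
  wheel_D R n + wheel_A R n.

Definition B_coef (R : nzRingType) (k : nat) (j : nat) : R :=
  if j == 0%N then 3 else if (j == 1%N) || (j == k.-1) then 1 else 0.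

Definition C_coef (R : nzRingType) (k : nat) (j : nat) : R :=
  if (j == 0%N) || (j == k.-1) then 1 else 0.

Definition Cmat (R : nzRingType) (n : nat) : 'M[R]_(n.-1) := circ n.-1 (C_coef R n.-1).

Definition Xmat (R : fieldType) (n : nat) : 'M[R]_(n.-1) :=
  2%:R *: (invmx (Cmat R n *m (Cmat R n)^T + 1%:M)
           *m ((n.-1)%:R *: 1%:M - const_mx 1)).

Definition b_coef (R : rcfType) (n j : nat) : R :=
  let s := Num.sqrt (5%:R : R) in
  - (2%:R / 5%:R) +
  (2%:R ^+ (n - j) * (n.-1)%:R / s) *
  ((-3%:R + s) ^+ j / (2%:R ^+ n.-1 - (-3%:R + s) ^+ n.-1)
   - (-3%:R - s) ^+ j / (2%:R ^+ n.-1 - (-3%:R - s) ^+ n.-1)).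

Definition Qplus (R : fieldType) (n : nat) : 'M[R]_(1 + n.-1) :=
  (4%:R * (n.-1)%:R)^-1 *:
  block_mx (5%:R%:M : 'M[R]_1) (- const_mx 1) (- const_mx 1)
           (const_mx 1 + 2%:R *: Xmat R n).

(* Write S for the cyclic shift of order k = n - 1.  Then C = I + S^T and the
   rim block of Q is B = 3 I + S + S^T = C C^T + I.  A circulant circ(g) inverts
   B as soon as g solves g(m+2) + 3 g(m+1) + g(m) = 0 with the wrap-around
   conditions g(k) = g(0) and 3 g(0) + g(1) + g(k-1) = 1; with rho+-
   = (-3 +- sqrt 5)/2 the roots of x^2 + 3x + 1 (so rho+ rho- = 1) the solution is
   g(j) = (rho+^j/(1 - rho+^k) - rho-^j/(1 - rho-^k))/sqrt 5, and rescaling gives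
   the b_j of the statement.  Since B 1 = 5 1, X = 2 B^-1 (k I - J) satisfies
   1^T X = 0 and B X = 2 (k I - J), from which a block computation yields
   Q Q^+ = I; the inverse of an invertible matrix is its only Moore-Penrose
   inverse. *)

From mathcomp Require Import all_boot all_order all_algebra all_fingroup.
From mathcomp Require Import zify ring lra.
Set Implicit Arguments. Unset Strict Implicit. Unset Printing Implicit Defensive.
Import Order.TTheory GRing.Theory Num.Theory.
Local Open Scope ring_scope.

Lemma modn_subn (k x : nat) : (k <= x < k + k)%N -> (x %% k = x - k)%N.
Proof.
case/andP=> le_kx lt_x2k.
by rewrite -{1}(subnK le_kx) modnDr modn_small ?ltn_subLR.
Qed.

(* Every residue below is of a number smaller than [2 k]: unfolding the
   innermost ones first reduces the goal to linear arithmetic. *)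
Ltac mod_lia :=
  repeat match goal with
  | |- context [(?x %% ?m)%N] =>
      lazymatch x with context [modn] => fail | _ => idtac end;
      case: (ltnP x m) => ?;
      [rewrite (@modn_small x m) // | rewrite (@modn_subn m x); last lia]
  end; lia.

Lemma ordS_neq k (i : 'I_k) : (1 < k)%N -> ordS i != i.
Proof.
move=> k_gt1; have lt_ik := ltn_ord i.
by rewrite -val_eqE /=; apply/eqP; mod_lia.
Qed.

Lemma ordS_asym k (i j : 'I_k) : (2 < k)%N -> ordS i == j -> ordS j != i.
Proof.
move=> k_gt2; have lt_ik := ltn_ord i; have lt_jk := ltn_ord j.
rewrite -!val_eqE /= => /eqP; apply: contra_eqN => /eqP; mod_lia.
Qed.

Section CirculantShift.

Variables (R : nzRingType) (k : nat).

Definition cycle_shift : {perm 'I_k} := perm (@ordS_inj k).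

Local Notation S := (perm_mx cycle_shift : 'M[R]_k).
Local Notation cdiff i j := ((j + k - i) %% k)%N.

Lemma cycle_shiftV i : (cycle_shift^-1)%g i = ord_pred i.
Proof. by rewrite -[in RHS](permKV cycle_shift i) [cycle_shift _]permE ordSK. Qed.

Lemma cycle_shift_trmx_mul : S^T *m S = 1%:M.
Proof. by rewrite tr_perm_mx -perm_mxM mulVg perm_mx1. Qed.

Lemma circ_cycle_shift_mul (c : nat -> R) :
  S *m circ k c = circ k (fun d => c ((d + k.-1) %% k)%N).
Proof.
apply/matrixP => i j; rewrite -row_permE !mxE permE /=.
have lt_ik := ltn_ord i; have lt_jk := ltn_ord j.
congr (c _); mod_lia.
Qed.

Lemma circ_cycle_shift_trmx_mul (c : nat -> R) :
  S^T *m circ k c = circ k (fun d => c (d.+1 %% k)%N).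
Proof.
apply/matrixP => i j; rewrite tr_perm_mx -row_permE !mxE cycle_shiftV /=.
have lt_ik := ltn_ord i; have lt_jk := ltn_ord j.
congr (c _); rewrite /ord_pred /=; mod_lia.
Qed.

Lemma eq_circ (c c' : nat -> R) :
  (forall d, (d < k)%N -> c d = c' d) -> circ k c = circ k c'.
Proof.
move=> ec; apply/matrixP => i j; rewrite !mxE ec // ltn_pmod //.
exact: leq_ltn_trans (leq0n i) (ltn_ord i).
Qed.

Lemma circ_delta0 : circ k (fun d => (d == 0)%N%:R) = 1%:M :> 'M[R]_k.
Proof.
apply/matrixP => i j; rewrite !mxE; congr (_%:R).
have lt_ik := ltn_ord i; have lt_jk := ltn_ord j.
by rewrite -val_eqE; apply/eqP/eqP => /=; mod_lia.
Qed.

Lemma circ_band (c : nat -> R) : (2 < k)%N ->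
    (forall d, (1 < d < k.-1)%N -> c d = 0) ->
  circ k c = c 0%N *: 1%:M + c 1%N *: S + c k.-1 *: S^T.
Proof.
move=> k_gt2 c_band; apply/matrixP => i j; rewrite !mxE !permE.
have lt_ik := ltn_ord i; have lt_jk := ltn_ord j.
have d0 : (i == j) = (cdiff i j == 0)%N.
  by rewrite -val_eqE; apply/eqP/eqP => /=; mod_lia.
have d1 : (ordS i == j) = (cdiff i j == 1)%N.
  by rewrite -val_eqE; apply/eqP/eqP => /=; mod_lia.
have dk : (ordS j == i) = (cdiff i j == k.-1)%N.
  by rewrite -val_eqE; apply/eqP/eqP => /=; mod_lia.
have lt_dk : (cdiff i j < k)%N by rewrite ltn_pmod //; lia.
rewrite d0 d1 dk; move: (cdiff i j) lt_dk => d lt_dk.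
have k1_gt1 : (1 < k.-1)%N by lia.
have [->|d_neq0] := eqVneq d 0%N.
  by rewrite /= eq_sym gtn_eqF 1?ltnW // mulr1 !mulr0 !addr0.
have [->|d_neq1] := eqVneq d 1%N.
  by rewrite eq_sym gtn_eqF // mulr1 !mulr0 add0r addr0.
have [->|d_neqk] := eqVneq d k.-1; first by rewrite !mulr0 mulr1 !add0r.
by rewrite c_band ?mulr0 ?addr0 //; lia.
Qed.

Definition cyclic_band_mx (t : R) : 'M[R]_k := t%:M + S + S^T.

Lemma trmx_cyclic_band (t : R) : (cyclic_band_mx t)^T = cyclic_band_mx t.
Proof. by rewrite /cyclic_band_mx !linearD /= tr_scalar_mx trmxK addrAC. Qed.

Lemma cyclic_band_mul_circ (t : R) (c : nat -> R) :
  cyclic_band_mx t *m circ k c =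
  circ k (fun d => t * c d + c ((d + k.-1) %% k)%N + c (d.+1 %% k)%N).
Proof.
rewrite !mulmxDl mul_scalar_mx circ_cycle_shift_mul circ_cycle_shift_trmx_mul.
by apply/matrixP => i j; rewrite !mxE.
Qed.

Lemma cyclic_band_mul_const (t a : R) (m : nat) :
  cyclic_band_mx t *m const_mx a = (t + 2%:R) *: (const_mx a : 'M_(k, m)).
Proof.
rewrite !mulmxDl mul_scalar_mx tr_perm_mx -!row_permE !row_perm_const.
by rewrite scalerDl -addrA scaler_nat.
Qed.

Lemma cyclic_band_mul_circ_recurrence (t : R) (g : nat -> R) : (1 < k)%N ->
    (forall m, g m.+2 + t * g m.+1 + g m = 0) -> g k = g 0%N ->
    t * g 0%N + g k.-1 + g 1%N = 1 ->
  cyclic_band_mx t *m circ k g = 1%:M.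
Proof.
move=> k_gt1 g_rec g_per g_init; rewrite cyclic_band_mul_circ -circ_delta0.
apply: eq_circ => d lt_dk.
have [->|d_gt0] := posnP d.
  by rewrite add0n !modn_small ?prednK //; lia.
rewrite mulr0n; have [-> | d_neqk] := eqVneq d k.-1.
  rewrite prednK ?modnn -?g_per; last lia.
  have /modn_subn -> : (k <= k.-1 + k.-1 < k + k)%N by lia.
  rewrite (_ : (k.-1 + k.-1 - k)%N = k.-2); last lia.
  have e2 : k.-2.+2 = k by lia.
  have e1 : k.-2.+1 = k.-1 by lia.
  by have := g_rec k.-2; rewrite e2 e1 => <-; rewrite addrC addrA.
have /modn_subn -> : (k <= d + k.-1 < k + k)%N by lia.
rewrite modn_small; last lia.
rewrite (_ : (d + k.-1 - k)%N = d.-1); last lia.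
by have := g_rec d.-1; rewrite prednK // => <-; rewrite addrC addrA.
Qed.

End CirculantShift.

Lemma const_mul_cyclic_band (R : comNzRingType) k m (t a : R) :
  const_mx a *m cyclic_band_mx k t = (t + 2%:R) *: (const_mx a : 'M_(m, k)).
Proof.
apply: trmx_inj; rewrite trmx_mul trmx_cyclic_band !linearZ /= !trmx_const.
exact: cyclic_band_mul_const.
Qed.

Section ReciprocalRoots.

Variables (F : fieldType) (a b : F) (k : nat).
Hypotheses (ab1 : a * b = 1) (a_neq_b : a != b) (ak_neq1 : a ^+ k != 1).

Definition periodic_sol (j : nat) : F :=
  (a ^+ j / (1 - a ^+ k) - b ^+ j / (1 - b ^+ k)) / (a - b).

Lemma bk_neq1 : b ^+ k != 1.
Proof.
apply/eqP => bk1; move/eqP: ak_neq1; apply.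
by rewrite -[a ^+ k]mulr1 -bk1 -exprMn ab1 expr1n.
Qed.

Let ak_neq : 1 - a ^+ k != 0. Proof. by rewrite subr_eq0 eq_sym. Qed.
Let bk_neq : 1 - b ^+ k != 0. Proof. by rewrite subr_eq0 eq_sym bk_neq1. Qed.
Let ab_neq : a - b != 0. Proof. by rewrite subr_eq0. Qed.

Lemma periodic_sol_rec m :
  periodic_sol m.+2 + - (a + b) * periodic_sol m.+1 + periodic_sol m = 0.
Proof.
rewrite /periodic_sol !exprS.
have root_a : a * a - (a + b) * a + 1 = 0 by rewrite -ab1; ring.
have root_b : b * b - (a + b) * b + 1 = 0 by rewrite -ab1; ring.
set x := a ^+ m; set y := b ^+ m.
transitivity ((x * (a * a - (a + b) * a + 1) / (1 - a ^+ k)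
               - y * (b * b - (a + b) * b + 1) / (1 - b ^+ k)) / (a - b)).
  by ring.
by rewrite root_a root_b !(mulr0, mul0r) subrr mul0r.
Qed.

Lemma periodic_sol_period : periodic_sol k = periodic_sol 0.
Proof.
rewrite /periodic_sol !expr0; congr (_ / _).
by field; rewrite ak_neq bk_neq.
Qed.

Lemma periodic_sol_init (k_gt0 : (0 < k)%N) :
  - (a + b) * periodic_sol 0 + periodic_sol k.-1 + periodic_sol 1 = 1.
Proof.
have ak : a ^+ k = a * a ^+ k.-1 by rewrite -exprS prednK.
have bk : b ^+ k = b * b ^+ k.-1 by rewrite -exprS prednK.
have a_den := ak_neq; have b_den := bk_neq.
rewrite /periodic_sol !expr0 !expr1 ak bk in a_den b_den *.
set x := a ^+ k.-1 in a_den *; set y := b ^+ k.-1 in b_den *.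
have ea : - (a + b) + a + x = - b * (1 - a * x).
  by transitivity (- b + (a * b) * x); [rewrite ab1; ring | ring].
have eb : - (a + b) + b + y = - a * (1 - b * y).
  by transitivity (- a + (a * b) * y); [rewrite ab1; ring | ring].
transitivity (((- (a + b) + a + x) / (1 - a * x)
               - (- (a + b) + b + y) / (1 - b * y)) / (a - b)); first by ring.
by rewrite ea eb !mulfK //; field.
Qed.

End ReciprocalRoots.

Lemma cyclic_band_mul_periodic_sol (F : fieldType) (a b : F) (k : nat) :
    a * b = 1 -> a != b -> a ^+ k != 1 -> (1 < k)%N ->
  cyclic_band_mx k (- (a + b)) *m circ k (periodic_sol a b k) = 1%:M.
Proof.
move=> ab1 a_neq_b ak_neq1 k_gt1.
apply: cyclic_band_mul_circ_recurrence => //.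
- exact: periodic_sol_rec.
- exact: periodic_sol_period.
- by apply: periodic_sol_init => //; lia.
Qed.

Lemma mul_const_mx (R : pzSemiRingType) (m n p : nat) (a b : R) :
  const_mx a *m (const_mx b : 'M_(n, p)) = const_mx (a * b *+ n) :> 'M[R]_(m, p).
Proof.
apply/matrixP => i j; rewrite !mxE.
by under eq_bigr do rewrite !mxE; rewrite sumr_const card_ord.
Qed.

Lemma invmx_mul_eigen (F : fieldType) k m (M : 'M[F]_k) (v : 'M_(k, m)) c :
  M \in unitmx -> c != 0 -> M *m v = c *: v -> invmx M *m v = c^-1 *: v.
Proof.
move=> M_unit c_neq0 Mv.
by rewrite -[v in LHS]scale1r -(mulVf c_neq0) -scalerA -Mv scalemxAr mulKmx.
Qed.

Lemma mul_invmx_eigen (F : fieldType) k m (M : 'M[F]_k) (v : 'M_(m, k)) c :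
  M \in unitmx -> c != 0 -> v *m M = c *: v -> v *m invmx M = c^-1 *: v.
Proof.
move=> M_unit c_neq0 vM.
by rewrite -[v in LHS]scale1r -(mulVf c_neq0) -scalerA -vM scalemxAl mulmxK.
Qed.

Lemma is_moore_penrose_inverse (R : comNzRingType) m (A P : 'M[R]_m) :
  A *m P = 1%:M -> forall P', is_moore_penrose A P' <-> P' = P.
Proof.
move=> AP1 P'; have PA1 := mulmx1C AP1; split => [[AP'A _ _ _] | ->].
  transitivity (P *m (A *m P' *m A) *m P); last by rewrite AP'A PA1 mul1mx.
  by rewrite !mulmxA PA1 mul1mx -mulmxA AP1 mulmx1.
by split; rewrite ?AP1 ?PA1 ?mul1mx ?trmx1.
Qed.

Section Wheel.

Variables (R : nzRingType) (n : nat).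
Hypothesis n_gt3 : (3 < n)%N.

Local Notation k := n.-1.
Local Notation S := (perm_mx (cycle_shift k) : 'M[R]_k).

Let k_gt2 : (2 < k)%N. Proof. lia. Qed.

Lemma wheel_A_block :
  wheel_A R n = block_mx 0 (const_mx 1) (const_mx 1) (S + S^T).
Proof.
rewrite -[wheel_A R n]submxK; congr block_mx; apply/matrixP => i j.
all: rewrite !mxE /wheel_adj.
- by rewrite !ord1 eqxx.
- by rewrite eq_lrshift (ord1 i).
- by rewrite eq_rlshift (ord1 j) orbT.
rewrite eq_rshift /= !add0n !permE.
rewrite (_ : cyc_adj k i j = (ordS i == j) || (ordS j == i)) //.
have [->|_] := eqVneq i j.
  by rewrite (negbTE (ordS_neq j (ltnW k_gt2))) /= mulr0n addr0.
have [ij|_] := boolP (ordS i == j); last by rewrite mulr0n add0r.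
by rewrite (negbTE (ordS_asym k_gt2 ij)) /= mulr0n addr0.
Qed.

Lemma wheel_A_mul_const :
  wheel_A R n *m const_mx 1 = col_mx (const_mx k%:R) (const_mx 3%:R) :> 'cV_(1 + k).
Proof.
rewrite wheel_A_block -(col_mx_const 1 k) mul_block_col !mul_const_mx.
rewrite mulmxDl tr_perm_mx -!row_permE !row_perm_const.
congr col_mx; apply/matrixP => i j; rewrite !mxE ?mul0r ?mul1r ?mulr0n ?add0r //.
Qed.

Lemma wheel_D_block : wheel_D R n = block_mx k%:R%:M 0 0 3%:R%:M.
Proof.
have degE : \row_i (\sum_j (wheel_adj n i j)%:R) = (wheel_A R n *m const_mx 1)^T.
  by apply/matrixP => i j; rewrite !mxE; apply: eq_bigr => l _; rewrite !mxE mulr1.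
rewrite /wheel_D degE wheel_A_mul_const tr_col_mx !trmx_const.
by rewrite diag_mx_row !diag_const_mx.
Qed.

Lemma wheel_Q_block :
  wheel_Q R n = block_mx k%:R%:M (const_mx 1) (const_mx 1) (cyclic_band_mx k 3%:R).
Proof.
rewrite /wheel_Q wheel_D_block wheel_A_block add_block_mx addr0 !add0r.
by rewrite /cyclic_band_mx addrA.
Qed.

End Wheel.

Lemma circ_B_coef (R : nzRingType) k : (2 < k)%N ->
  circ k (B_coef R k) = cyclic_band_mx k 3%:R.
Proof.
move=> k_gt2; rewrite circ_band //; last first.
  by move=> d /andP[d_gt1 d_lt]; rewrite /B_coef !ifF //; lia.
have k1_neq0 : (k.-1 == 0)%N = false by lia.
by rewrite /B_coef /= k1_neq0 eqxx orbT scalemx1 !scale1r.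
Qed.

Lemma Cmat_cycle_shift (R : nzRingType) n : (3 < n)%N ->
  Cmat R n = 1%:M + (perm_mx (cycle_shift n.-1))^T.
Proof.
move=> n_gt3; have k_gt2 : (2 < n.-1)%N by lia.
rewrite /Cmat circ_band //; last first.
  by move=> d /andP[d_gt1 d_lt]; rewrite /C_coef !ifF //; lia.
have k1_neq1 : (1 == n.-2)%N = false by lia.
by rewrite /C_coef /= eqxx orbT k1_neq1 scale0r addr0 !scale1r.
Qed.

Lemma Cmat_mul_trmx_add1 (R : nzRingType) n : (3 < n)%N ->
  Cmat R n *m (Cmat R n)^T + 1%:M = cyclic_band_mx n.-1 3%:R.
Proof.
move=> n_gt3; rewrite Cmat_cycle_shift // linearD /= trmx1 trmxK.
rewrite mulmxDl !mulmxDr cycle_shift_trmx_mul !mul1mx mulmx1 /cyclic_band_mx.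
have -> : 3%:R%:M = 1%:M + 1%:M + 1%:M :> 'M[R]_n.-1 by rewrite -!raddfD /= -!natr1 add0r.
set S := perm_mx _; set I := 1%:M.
by rewrite [S^T + I]addrC !addrA (addrAC _ S^T) (addrAC I S) (addrAC (I + I) S).
Qed.

Section WheelRoots.

Variable R : rcfType.

Local Notation s5 := (Num.sqrt (5%:R : R)).

Definition rho_plus : R := (- 3%:R + s5) / 2%:R.
Definition rho_minus : R := (- 3%:R - s5) / 2%:R.

Lemma sqrt5_sqr : s5 * s5 = 5%:R.
Proof. by rewrite -expr2 sqr_sqrtr // ler0n. Qed.

Lemma sqrt5_bounds : 2%:R < s5 < 3%:R.
Proof.
have s5_sqr := sqrt5_sqr; have s5_ge0 : 0 <= s5 := sqrtr_ge0 _.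
by apply/andP; split; nra.
Qed.

Lemma rho_mul : rho_plus * rho_minus = 1.
Proof.
rewrite /rho_plus /rho_minus.
transitivity ((9%:R - s5 * s5) / 4%:R); first by field.
by rewrite sqrt5_sqr; field.
Qed.

Lemma rho_add : - (rho_plus + rho_minus) = 3%:R.
Proof. by rewrite /rho_plus /rho_minus; field. Qed.

Lemma rho_sub : rho_plus - rho_minus = s5.
Proof. by rewrite /rho_plus /rho_minus; field. Qed.

Lemma rho_plus_neq_minus : rho_plus != rho_minus.
Proof.
rewrite -subr_eq0 rho_sub; have := sqrt5_bounds; case/andP => ? _.
by apply/eqP => s0; lra.
Qed.

Lemma rho_plusX_neq1 k : (0 < k)%N -> rho_plus ^+ k != 1.
Proof.
move=> k_gt0; have /andP[s_gt2 s_lt3] := sqrt5_bounds.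
have rho_lt1 : `|rho_plus| < 1 by rewrite ltr_norml /rho_plus; apply/andP; split; lra.
apply/eqP => rhoX1; have := exprn_ilt1 k (normr_ge0 _) rho_lt1.
by rewrite -normrX rhoX1 normr1 ltxx; lia.
Qed.

Lemma b_coef_periodic_sol k j : (0 < k)%N -> (j <= k)%N ->
  b_coef R k.+1 j = 2%:R * (k%:R * periodic_sol rho_plus rho_minus k j - 5%:R^-1).
Proof.
move=> k_gt0 le_jk.
have a_den : 1 - rho_plus ^+ k != 0 by rewrite subr_eq0 eq_sym rho_plusX_neq1.
have b_den : 1 - rho_minus ^+ k != 0.
  by rewrite subr_eq0 eq_sym (bk_neq1 rho_mul (rho_plusX_neq1 k_gt0)).
have s_neq0 : s5 != 0 by rewrite gt_eqF // sqrtr_gt0 ltr0n.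
have two_rho_plus : - 3%:R + s5 = 2%:R * rho_plus by rewrite /rho_plus; field.
have two_rho_minus : - 3%:R - s5 = 2%:R * rho_minus by rewrite /rho_minus; field.
rewrite /b_coef /= /periodic_sol rho_sub two_rho_plus two_rho_minus.
rewrite subSn // exprS !(exprMn _ 2%:R).
(* Abstract the roots, lest [field] unfold and expand them. *)
move: a_den b_den; move: rho_plus rho_minus => a b a_den b_den.
have -> : (2%:R : R) ^+ k = 2%:R ^+ (k - j) * 2%:R ^+ j by rewrite -exprD subnK.
have two_j : (2%:R : R) ^+ j != 0 by rewrite expf_neq0 // pnatr_eq0.
have two_kj : (2%:R : R) ^+ (k - j) != 0 by rewrite expf_neq0 // pnatr_eq0.
have factor c d : c - c * d = c * (1 - d) :> R by ring.
by field; rewrite s_neq0 a_den b_den !factor !mulf_neq0.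
Qed.

End WheelRoots.

Section WheelInverse.

Variables (R : rcfType) (n : nat).
Hypothesis n_gt3 : (3 < n)%N.

Local Notation k := n.-1.
Local Notation B := (cyclic_band_mx k 3%:R : 'M[R]_k).
Local Notation J := (const_mx 1).

Lemma cyclic_band3_mul_periodic_sol :
  B *m circ k (periodic_sol (rho_plus R) (rho_minus R) k) = 1%:M.
Proof.
rewrite -rho_add; apply: cyclic_band_mul_periodic_sol.
- exact: rho_mul.
- exact: rho_plus_neq_minus.
- by apply: rho_plusX_neq1; lia.
- lia.
Qed.

Lemma cyclic_band3_unit : B \in unitmx.
Proof. by case: (mulmx1_unit cyclic_band3_mul_periodic_sol). Qed.

Lemma Xmat_band : Xmat R n = 2%:R *: (invmx B *m (k%:R *: 1%:M - J)).
Proof. by rewrite /Xmat Cmat_mul_trmx_add1. Qed.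

Lemma invmx_cyclic_band3 : invmx B = circ k (periodic_sol (rho_plus R) (rho_minus R) k).
Proof.
rewrite -[invmx B]mulmx1 -cyclic_band3_mul_periodic_sol mulmxA mulVmx ?mul1mx //.
exact: cyclic_band3_unit.
Qed.

Let five_neq0 : 5%:R != 0 :> R. Proof. by rewrite pnatr_eq0. Qed.

Lemma Xmat_circ : Xmat R n = circ k (b_coef R n).
Proof.
have invB_J : invmx B *m J = 5%:R^-1 *: J :> 'M_k.
  by apply: invmx_mul_eigen; rewrite ?cyclic_band3_unit ?cyclic_band_mul_const -?natrD.
rewrite Xmat_band mulmxBr -scalemxAr mulmx1 invB_J invmx_cyclic_band3.
apply/matrixP => i j; rewrite !mxE.
rewrite -[X in b_coef R X](prednK (_ : (0 < n)%N)); last lia.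
rewrite b_coef_periodic_sol; [by rewrite mulr1 | lia |].
by apply: ltnW; rewrite ltn_pmod //; lia.
Qed.

Lemma cyclic_band3_mul_Xmat : B *m Xmat R n = 2%:R *: (k%:R *: 1%:M - J).
Proof. by rewrite Xmat_band -scalemxAr mulKVmx // cyclic_band3_unit. Qed.

Lemma const_mul_Xmat : J *m Xmat R n = 0 :> 'M_(1, k).
Proof.
have J_invB : J *m invmx B = 5%:R^-1 *: J :> 'M_(1, k).
  by apply: mul_invmx_eigen; rewrite ?cyclic_band3_unit ?const_mul_cyclic_band -?natrD.
rewrite Xmat_band -scalemxAr mulmxA J_invB -scalemxAl mulmxBr -scalemxAr mulmx1.
by rewrite mul_const_mx mul1r scalemx_const mulr1 subrr !scaler0.
Qed.

Lemma wheel_Q_mul_Qplus : wheel_Q R n *m Qplus R n = 1%:M.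
Proof.
have k_neq0 : k%:R != 0 :> R by rewrite pnatr_eq0; lia.
rewrite wheel_Q_block // /Qplus -scalemxAr mulmx_block.
move: const_mul_Xmat cyclic_band3_mul_Xmat; move: (Xmat R n) => X JX BX.
rewrite !mulmxN !mulmxDr -!scalemxAr JX BX.
rewrite !cyclic_band_mul_const !mul_const_mx !mul_scalar_mx !mul_mx_scalar.
rewrite (scalar_mx_block 1 k) scale_block_mx.
congr block_mx; apply/matrixP => i j; rewrite !mxE ?mulr1 ?mul1r ?mulr0 ?addr0.
- by rewrite !ord1 eqxx /= !mulr1n; field.
- by rewrite addNr mulr0.
- by rewrite -natrD subrr mulr0.
- by case: (i == j); field.
Qed.

End WheelInverse.

Theorem mainTheorem5 (R : rcfType) (n : nat) (hn : (4 <= n)%N) :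
  [/\ wheel_Q R n =
        block_mx ((n.-1)%:R%:M : 'M[R]_1) (const_mx 1) (const_mx 1)
                 (circ n.-1 (B_coef R n.-1)),
      (Cmat R n *m (Cmat R n)^T + 1%:M) \in unitmx,
      Xmat R n = circ n.-1 (b_coef R n)
    & forall P : 'M[R]_(1 + n.-1),
        is_moore_penrose (wheel_Q R n) P <-> P = Qplus R n].
Proof.
split.
- by rewrite circ_B_coef ?wheel_Q_block //; lia.
- by rewrite Cmat_mul_trmx_add1 // cyclic_band3_unit.
- exact: Xmat_circ.
- exact/is_moore_penrose_inverse/wheel_Q_mul_Qplus.
Qed.
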